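(* Let $\mathcal H$ be a 3-dimensional Hilbert space with orthonormal basis $|1,1\rangle,|2,1\rangle,|2,2\rangle$, let $E_1<E_2$ be real, and let $$H_0=E_1|1,1\rangle\langle1,1|+E_2\big(|2,1\rangle\langle2,1|+|2,2\rangle\langle2,2|\big),\qquad iH_I=d_1x_{11,21}+d_2x_{11,22},$$ with real $d_1,d_2$ not both zero. Then the real Lie algebra $L_0$ generated by $iH_0$ and $iH_I$ is 4-dimensional and isomorphic to $\mathfrak{su}(2)\oplus\mathfrak{u}(1)$; in particular $L_0$ does not contain $\mathfrak{su}(3)$, so the system with Hamiltonian $H_0+f(t)H_I$ is not completely controllable.
   Context: $x_{11,2k}=i\big(|1,1\rangle\langle2,k|+|2,k\rangle\langle1,1|\big)$ for $k=1,2$. The system with Hamiltonian $H_0+f(t)H_I$ ($f$ a real control field) is called completely controllable if the Lie algebra generated by $iH_0$ and $iH_I$ contains $\mathfrak{su}(3)$. *)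

From HB Require Import structures.
From mathcomp Require Import all_boot all_order all_algebra.
From mathcomp Require Import complex.
Set Implicit Arguments. Unset Strict Implicit. Unset Printing Implicit Defensive.
Import Order.TTheory GRing.Theory Num.Theory.
Local Open Scope ring_scope.

Section Defs.
Variable R : rcfType.
Local Notation C := (complex R).

Definition iC : C := Complex 0 1.
Definition rC (r : R) : C := Complex r 0.

Definition rscale n (r : R) (A : 'M[C]_n) : 'M[C]_n := rC r *: A.

Definition lie_br n (A B : 'M[C]_n) : 'M[C]_n := A *m B - B *m A.

Definition adj n (A : 'M[C]_n) : 'M[C]_n := (map_mx (@conjc R) A)^T.

Definition su n (X : 'M[C]_n) : Prop := adj X = - X /\ \tr X = 0.

Definition real_lie_subalg n (S : 'M[C]_n -> Prop) : Prop :=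
  [/\ S 0,
      forall A B, S A -> S B -> S (A + B),
      forall r A, S A -> S (rscale r A) &
      forall A B, S A -> S B -> S (lie_br A B)].

Definition lie_gen n (A B : 'M[C]_n) : 'M[C]_n -> Prop :=
  fun X => forall S, real_lie_subalg S -> S A -> S B -> S X.

Definition real_dim n (S : 'M[C]_n -> Prop) (k : nat) : Prop :=
  exists v : 'I_k -> 'M[C]_n,
    [/\ forall i, S (v i),
        forall c : 'I_k -> R, \sum_(i < k) rscale (c i) (v i) = 0 ->
                               forall i, c i = 0 &
        forall X, S X -> exists c : 'I_k -> R, X = \sum_(i < k) rscale (c i) (v i)].

Definition u1 (z : C) : Prop := conjc z = - z.

(* su(2) (+) u(1), realized as pairs (X, z), with componentwise operations
   and bracket [(X,z),(Y,w)] = ([X,Y], 0) *)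
Definition su2u1 (p : 'M[C]_2 * C) : Prop := su p.1 /\ u1 p.2.

Definition iso_su2_u1 (S : 'M[C]_3 -> Prop) : Prop :=
  exists phi : 'M[C]_3 -> 'M[C]_2 * C,
    [/\ forall A B, S A -> S B ->
          phi (A + B) = ((phi A).1 + (phi B).1, (phi A).2 + (phi B).2),
        forall r A, S A ->
          phi (rscale r A) = (rscale r (phi A).1, rC r * (phi A).2),
        forall A B, S A -> S B ->
          phi (lie_br A B) = (lie_br (phi A).1 (phi B).1, 0),
        forall A B, S A -> S B -> phi A = phi B -> A = B &
        forall p, su2u1 p <-> exists2 A, S A & phi A = p].

Definition completely_controllable (H0 HI : 'M[C]_3) : Prop :=
  forall X, su X -> lie_gen (iC *: H0) (iC *: HI) X.

(* basis |1,1> = index 0, |2,1> = index 1, |2,2> = index 2 *)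
Definition k11 : 'I_3 := @Ordinal 3 0 isT.
Definition k21 : 'I_3 := @Ordinal 3 1 isT.
Definition k22 : 'I_3 := @Ordinal 3 2 isT.

Definition H0 (E1 E2 : R) : 'M[C]_3 :=
  rC E1 *: delta_mx k11 k11 + rC E2 *: (delta_mx k21 k21 + delta_mx k22 k22).

Definition x11 (j : 'I_3) : 'M[C]_3 := iC *: (delta_mx k11 j + delta_mx j k11).

(* H_I defined by i H_I = d1 x_{11,21} + d2 x_{11,22} *)
Definition HI (d1 d2 : R) : 'M[C]_3 :=
  (- iC) *: (rC d1 *: x11 k21 + rC d2 *: x11 k22).

End Defs.

From HB Require Import structures.
From mathcomp Require Import all_boot all_order all_algebra.
From mathcomp Require Import complex ring lra.
Set Implicit Arguments. Unset Strict Implicit. Unset Printing Implicit Defensive.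
Import Order.TTheory GRing.Theory Num.Theory.
Local Open Scope ring_scope.

(* Put A0 = iH0, A1 = iH_I, A2 = [A0, A1] / (E2 - E1) and A3 = [A1, A2] / 2.
   The brackets close: A0 commutes with A3 and rotates the pair (A1, A2),
   while [A1, A3] = -2|d|^2 A2 and [A2, A3] = 2|d|^2 A1.  So L0 is the real
   span of A0, ..., A3, and these are independent since the coordinates can
   be read off from the matrix entries.  In the orthonormal basis |1,1>, b, w
   with b = (d1 |2,1> + d2 |2,2>) / |d|, every element of L0 acts on w by a
   scalar and on span(|1,1>, b) by an anti-Hermitian 2x2 matrix; its traceless
   part together with the A0-coordinate identifies L0 with su(2) (+) u(1).
   Finally, every element of L0 has a purely imaginary (|2,1>, |2,2>) entry,
   which is not the case in su(3). *)

Ltac mx_entries := apply/matrixP => -[[|[|[|?]]] ?] -[[|[|[|?]]] ?] //;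
  rewrite !mxE ?big_ord_recl ?big_ord0 ?mxE /= ?mulr1n ?mulr0n; simpc.

Section SuTwo.
Variable R : rcfType.
Local Notation C := (complex R).

Definition su2mx (u v w : R) : 'M[C]_2 :=
  \matrix_(i, j) match nat_of_ord i, nat_of_ord j with
    | 0, 0 => Complex 0 u
    | 0, _ => Complex v w
    | _, 0 => Complex (- v) w
    | _, _ => Complex 0 (- u)
    end.

Lemma su_su2mx u v w : su (su2mx u v w).
Proof.
split; first by rewrite /adj; mx_entries.
by rewrite /mxtrace !big_ord_recl big_ord0 !mxE /=; simpc.
Qed.

Lemma su2mxD u v w u' v' w' :
  su2mx u v w + su2mx u' v' w' = su2mx (u + u') (v + v') (w + w').
Proof. by mx_entries; congr Complex; ring. Qed.

Lemma su2mxZ r u v w : rscale r (su2mx u v w) = su2mx (r * u) (r * v) (r * w).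
Proof. by rewrite /rscale /rC; mx_entries; congr Complex; ring. Qed.

Lemma lie_br_su2mx u v w u' v' w' :
  lie_br (su2mx u v w) (su2mx u' v' w') =
  su2mx (2 * (v * w' - w * v')) (2 * (w * u' - u * w')) (2 * (u * v' - v * u')).
Proof. by rewrite /lie_br; mx_entries; congr Complex; ring. Qed.

Lemma su2mx_inj (u v w u' v' w' : R) :
  su2mx u v w = su2mx u' v' w' -> [/\ u = u', v = v' & w = w'].
Proof.
move=> e; move: (congr1 (fun M : 'M[C]_2 => M ord0 ord0) e).
move: (congr1 (fun M : 'M[C]_2 => M ord0 ord_max) e).
by rewrite !mxE /= => -[-> ->] [->].
Qed.

Lemma su_su2mxP (X : 'M[C]_2) : su X -> exists u v w, X = su2mx u v w.
Proof.
move=> [adjX trX].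
have antiX i j : X j i = - conjc (X i j).
  move: (congr1 (fun M : 'M[C]_2 => M j i) adjX).
  by rewrite !mxE => ->; rewrite opprK.
have {}trX : X ord0 ord0 + X ord_max ord_max = 0.
  have -> : ord_max = lift ord0 (ord0 : 'I_1) by apply/val_inj.
  by rewrite -trX /mxtrace !big_ord_recl big_ord0 addr0.
exists (complex.Im (X ord0 ord0)), (complex.Re (X ord0 ord_max)),
  (complex.Im (X ord0 ord_max)).
have ord2 (i : 'I_2) : i = ord0 \/ i = ord_max.
  by case: i => -[|[|?]] ? //; [left | right]; apply/val_inj.
apply/matrixP => i j; rewrite mxE.
case: (ord2 i) (ord2 j) => -> [] -> /=;
  move: (antiX ord0 ord0) (antiX ord0 ord_max) (antiX ord_max ord_max) trX;
  case: (X ord0 ord0) => a b; case: (X ord0 ord_max) => c d;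
  case: (X ord_max ord0) => e f; case: (X ord_max ord_max) => g h /=; simpc;
  move=> [?] [? ?] [?] /(congr1 (@complex.Im R)) /= ?; congr Complex; lra.
Qed.
End SuTwo.

Section GeneratedAlgebra.
Variables (R : rcfType) (E1 E2 d1 d2 : R).
Local Notation C := (complex R).
Local Notation dsq := (d1 ^+ 2 + d2 ^+ 2).
Local Notation L0 := (lie_gen (iC R *: H0 E1 E2) (iC R *: HI d1 d2)).

(* a0 A0 + a1 A1 + a2 A2 + a3 A3, with A0, ..., A3 as in the header *)
Definition span_mx (a0 a1 a2 a3 : R) : 'M[C]_3 :=
  \matrix_(i, j) match nat_of_ord i, nat_of_ord j with
    | 0, 0 => Complex 0 (a0 * E1 - a3 * dsq)
    | 0, 1 => Complex (a2 * d1) (a1 * d1)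
    | 0, 2 => Complex (a2 * d2) (a1 * d2)
    | 1, 0 => Complex (- (a2 * d1)) (a1 * d1)
    | 2, 0 => Complex (- (a2 * d2)) (a1 * d2)
    | 1, 1 => Complex 0 (a0 * E2 + a3 * d1 ^+ 2)
    | 2, 2 => Complex 0 (a0 * E2 + a3 * d2 ^+ 2)
    | _, _ => Complex 0 (a3 * d1 * d2)
    end.

Lemma span_mxD a0 a1 a2 a3 b0 b1 b2 b3 :
  span_mx a0 a1 a2 a3 + span_mx b0 b1 b2 b3 =
  span_mx (a0 + b0) (a1 + b1) (a2 + b2) (a3 + b3).
Proof. by mx_entries; congr Complex; ring. Qed.

Lemma span_mxZ r a0 a1 a2 a3 :
  rscale r (span_mx a0 a1 a2 a3) = span_mx (r * a0) (r * a1) (r * a2) (r * a3).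
Proof. by rewrite /rscale /rC; mx_entries; congr Complex; ring. Qed.

Lemma span_mx0 : span_mx 0 0 0 0 = 0.
Proof. by mx_entries; congr Complex; ring. Qed.

Lemma lie_br_span_mx a0 a1 a2 a3 b0 b1 b2 b3 :
  lie_br (span_mx a0 a1 a2 a3) (span_mx b0 b1 b2 b3) =
  span_mx 0 ((a0 * b2 - a2 * b0) * (E1 - E2) + 2 * dsq * (a2 * b3 - a3 * b2))
            ((a0 * b1 - a1 * b0) * (E2 - E1) - 2 * dsq * (a1 * b3 - a3 * b1))
            (2 * (a1 * b2 - a2 * b1)).
Proof. by rewrite /lie_br; mx_entries; congr Complex; ring. Qed.

Lemma iH0E : iC R *: H0 E1 E2 = span_mx 1 0 0 0.
Proof. by rewrite /H0 /iC /rC; mx_entries; congr Complex; ring. Qed.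

Lemma iHIE : iC R *: HI d1 d2 = span_mx 0 1 0 0.
Proof. by rewrite /HI /x11 /iC /rC; mx_entries; congr Complex; ring. Qed.

Definition in_span (X : 'M[C]_3) : Prop :=
  exists a0 a1 a2 a3, X = span_mx a0 a1 a2 a3.

Lemma real_lie_subalg_span : real_lie_subalg in_span.
Proof.
split.
- by exists 0, 0, 0, 0; rewrite span_mx0.
- move=> _ _ [a0 [a1 [a2 [a3 ->]]]] [b0 [b1 [b2 [b3 ->]]]].
  by rewrite span_mxD; do 4 eexists.
- by move=> r _ [a0 [a1 [a2 [a3 ->]]]]; rewrite span_mxZ; do 4 eexists.
- move=> _ _ [a0 [a1 [a2 [a3 ->]]]] [b0 [b1 [b2 [b3 ->]]]].
  by rewrite lie_br_span_mx; do 4 eexists.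
Qed.

Lemma lie_gen_span X : L0 X -> in_span X.
Proof.
apply; first exact: real_lie_subalg_span.
- by rewrite iH0E; do 4 eexists.
- by rewrite iHIE; do 4 eexists.
Qed.

Lemma L0_not_su3 : ~ (forall X : 'M[C]_3, su X -> L0 X).
Proof.
pose X : 'M[C]_3 := delta_mx k21 k22 - delta_mx k22 k21.
have suX : su X.
  split; first by rewrite /adj; mx_entries.
  by rewrite /mxtrace !big_ord_recl big_ord0 !mxE /=; simpc.
move=> /(_ X suX) /lie_gen_span [a0 [a1 [a2 [a3]]]].
move/(congr1 (fun M : 'M[C]_3 => complex.Re (M k21 k22))).
by rewrite !mxE /=; apply/eqP; rewrite subr0 oner_eq0.
Qed.

Hypothesis E12 : E1 != E2.

Lemma span_lie_gen X : in_span X -> L0 X.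
Proof.
move=> [a0 [a1 [a2 [a3 ->]]]] S [S0 SD SZ SB].
rewrite iH0E iHIE => SA0 SA1.
have SA2 : S (span_mx 0 0 1 0).
  have -> : span_mx 0 0 1 0 =
            rscale (E2 - E1)^-1 (lie_br (span_mx 1 0 0 0) (span_mx 0 1 0 0)).
    have E21 : E2 - E1 != 0 by rewrite subr_eq0 eq_sym.
    by rewrite lie_br_span_mx span_mxZ; congr span_mx; field.
  exact/SZ/SB.
have SA3 : S (span_mx 0 0 0 1).
  have -> : span_mx 0 0 0 1 =
            rscale 2^-1 (lie_br (span_mx 0 1 0 0) (span_mx 0 0 1 0)).
    by rewrite lie_br_span_mx span_mxZ; congr span_mx; field.
  exact/SZ/SB.
have -> : span_mx a0 a1 a2 a3 =
          rscale a0 (span_mx 1 0 0 0) + rscale a1 (span_mx 0 1 0 0) +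
          rscale a2 (span_mx 0 0 1 0) + rscale a3 (span_mx 0 0 0 1).
  by rewrite !span_mxZ !span_mxD; congr span_mx; ring.
by apply/SD/SZ => //; apply/SD/SZ => //; apply/SD/SZ => //; apply/SZ.
Qed.

Lemma L0E X : L0 X <-> in_span X.
Proof. by split; [apply: lie_gen_span | apply: span_lie_gen]. Qed.

Hypothesis dsq_neq0 : dsq != 0.

(* For A in the span, [im_b A] and [im_w A] are the imaginary parts of the
   diagonal entries of A at the unit vectors b = (d1, d2)/|d| and
   w = (d2, -d1)/|d| of the E2-eigenspace of H0. *)
Definition im_b (A : 'M[C]_3) : R :=
  (d1 ^+ 2 * complex.Im (A k21 k21) + 2 * d1 * d2 * complex.Im (A k21 k22)
   + d2 ^+ 2 * complex.Im (A k22 k22)) / dsq.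
Definition im_w (A : 'M[C]_3) : R :=
  (d2 ^+ 2 * complex.Im (A k21 k21) - 2 * d1 * d2 * complex.Im (A k21 k22)
   + d1 ^+ 2 * complex.Im (A k22 k22)) / dsq.

Definition coord0 (A : 'M[C]_3) : R :=
  (2 * im_w A - complex.Im (A k11 k11) - im_b A) / (E2 - E1).
Definition coord1 (A : 'M[C]_3) : R :=
  (d1 * complex.Im (A k11 k21) + d2 * complex.Im (A k11 k22)) / dsq.
Definition coord2 (A : 'M[C]_3) : R :=
  (d1 * complex.Re (A k11 k21) + d2 * complex.Re (A k11 k22)) / dsq.
Definition coord3 (A : 'M[C]_3) : R := (im_b A - im_w A) / dsq.

Lemma span_mxK a0 a1 a2 a3 (A := span_mx a0 a1 a2 a3) :
  [/\ coord0 A = a0, coord1 A = a1, coord2 A = a2 & coord3 A = a3].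
Proof.
have E21 : E2 - E1 != 0 by rewrite subr_eq0 eq_sym.
rewrite /A /coord0 /coord1 /coord2 /coord3 /im_b /im_w !mxE /=.
by split; field; rewrite ?E21.
Qed.

Lemma span_mx_inj a0 a1 a2 a3 b0 b1 b2 b3 :
  span_mx a0 a1 a2 a3 = span_mx b0 b1 b2 b3 ->
  [/\ a0 = b0, a1 = b1, a2 = b2 & a3 = b3].
Proof.
move=> eqA; case: (span_mxK a0 a1 a2 a3) (span_mxK b0 b1 b2 b3).
by rewrite eqA => <- <- <- <- [].
Qed.

Definition span_basis (i : 'I_4) : 'M[C]_3 :=
  span_mx (i == 0 :> nat)%:R (i == 1 :> nat)%:R (i == 2 :> nat)%:R (i == 3 :> nat)%:R.

Lemma sum_span_basis (c : 'I_4 -> R) :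
  \sum_(i < 4) rscale (c i) (span_basis i) =
  span_mx (c (inord 0)) (c (inord 1)) (c (inord 2)) (c (inord 3)).
Proof.
rewrite !big_ord_recl big_ord0 addr0 !span_mxZ !span_mxD /=.
rewrite !(mulr1, mulr0, addr0, add0r).
by congr span_mx; congr c; apply/val_inj; rewrite /= inordK.
Qed.

Lemma real_dim_L0 : real_dim L0 4.
Proof.
exists span_basis; split.
- by move=> i; apply/L0E; do 4 eexists.
- move=> c; rewrite sum_span_basis -span_mx0 => /span_mx_inj[c0 c1 c2 c3] i.
  by rewrite -(inord_val i); case: i => -[|[|[|[|?]]]].
- move=> X /L0E [a0 [a1 [a2 [a3 ->]]]].
  by exists (fun i => [:: a0; a1; a2; a3]`_i); rewrite sum_span_basis !inordK.
Qed.

Local Notation s := (Num.sqrt dsq).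

Lemma sqr_sqrt_dsq : s ^+ 2 = dsq.
Proof. by rewrite sqr_sqrtr // addr_ge0 ?sqr_ge0. Qed.

Lemma sqrt_dsq_neq0 : s != 0.
Proof. by rewrite sqrtr_eq0 -ltNge lt0r dsq_neq0 addr_ge0 ?sqr_ge0. Qed.

Definition to_su2u1 (A : 'M[C]_3) : 'M[C]_2 * C :=
  (su2mx (coord0 A * (E1 - E2) / 2 - coord3 A * dsq) (coord2 A * s) (coord1 A * s),
   Complex 0 (coord0 A)).

Lemma to_su2u1_span_mx a0 a1 a2 a3 :
  to_su2u1 (span_mx a0 a1 a2 a3) =
  (su2mx (a0 * (E1 - E2) / 2 - a3 * dsq) (a2 * s) (a1 * s), Complex 0 a0).
Proof. by rewrite /to_su2u1; case: (span_mxK a0 a1 a2 a3) => -> -> -> ->. Qed.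

Lemma to_su2u1D A B : L0 A -> L0 B ->
  to_su2u1 (A + B) =
  ((to_su2u1 A).1 + (to_su2u1 B).1, (to_su2u1 A).2 + (to_su2u1 B).2).
Proof.
move=> /L0E[a0 [a1 [a2 [a3 ->]]]] /L0E[b0 [b1 [b2 [b3 ->]]]].
rewrite span_mxD !to_su2u1_span_mx su2mxD /=; simpc.
by congr (su2mx _ _ _, _); ring.
Qed.

Lemma to_su2u1Z r A : L0 A ->
  to_su2u1 (rscale r A) = (rscale r (to_su2u1 A).1, rC r * (to_su2u1 A).2).
Proof.
move=> /L0E[a0 [a1 [a2 [a3 ->]]]].
rewrite span_mxZ !to_su2u1_span_mx su2mxZ /rC /=; simpc.
by congr (su2mx _ _ _, Complex _ _); ring.
Qed.

Lemma to_su2u1_lie_br A B : L0 A -> L0 B ->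
  to_su2u1 (lie_br A B) = (lie_br (to_su2u1 A).1 (to_su2u1 B).1, 0).
Proof.
move=> /L0E[a0 [a1 [a2 [a3 ->]]]] /L0E[b0 [b1 [b2 [b3 ->]]]].
rewrite lie_br_span_mx !to_su2u1_span_mx lie_br_su2mx /=.
move: sqr_sqrt_dsq; set t := Num.sqrt _ => <-.
by congr (su2mx _ _ _, _); field.
Qed.

Lemma to_su2u1_inj A B : L0 A -> L0 B -> to_su2u1 A = to_su2u1 B -> A = B.
Proof.
move=> /L0E[a0 [a1 [a2 [a3 ->]]]] /L0E[b0 [b1 [b2 [b3 ->]]]].
rewrite !to_su2u1_span_mx => -[/su2mx_inj[eu ev ew] e0]; subst b0.
have <- : a1 = b1 by apply: (mulIf sqrt_dsq_neq0).
have <- : a2 = b2 by apply: (mulIf sqrt_dsq_neq0).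
suff <- : a3 = b3 by [].
by apply: (mulIf dsq_neq0); lra.
Qed.

Lemma su2u1_to_su2u1 A : L0 A -> su2u1 (to_su2u1 A).
Proof.
move=> /L0E[a0 [a1 [a2 [a3 ->]]]]; rewrite to_su2u1_span_mx.
by split; [exact: su_su2mx | rewrite /u1 /=; simpc].
Qed.

Lemma to_su2u1_onto p : su2u1 p -> exists2 A, L0 A & to_su2u1 A = p.
Proof.
case: p => X z [/= /su_su2mxP[u [v [w ->]]]].
case: z => x y; rewrite /u1 /=; simpc => -[x0]; have {x0} -> : x = 0 by lra.
exists (span_mx y (w / s) (v / s) ((y * (E1 - E2) / 2 - u) / dsq)).
  by apply/L0E; do 4 eexists.
have s0 := sqrt_dsq_neq0.
by rewrite to_su2u1_span_mx; congr (su2mx _ _ _, _); field.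
Qed.

Lemma iso_su2_u1_L0 : iso_su2_u1 L0.
Proof.
exists to_su2u1; split; [exact: to_su2u1D | exact: to_su2u1Z | exact: to_su2u1_lie_br
  | exact: to_su2u1_inj | ].
by move=> p; split; [apply: to_su2u1_onto | case=> A /su2u1_to_su2u1 /[swap] ->].
Qed.

End GeneratedAlgebra.

Theorem mainTheorem2 (R : rcfType) (E1 E2 d1 d2 : R) :
  E1 < E2 -> (d1 != 0) || (d2 != 0) ->
  let L0 := lie_gen (iC R *: H0 E1 E2) (iC R *: HI d1 d2) in
  [/\ real_dim L0 4,
      iso_su2_u1 L0,
      ~ (forall X : 'M[complex R]_3, su X -> L0 X) &
      ~ completely_controllable (H0 E1 E2) (HI d1 d2)].
Proof.
move=> ltE12 d_neq0 L0.
have E12 : E1 != E2 by rewrite lt_eqF.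
have dsq_neq0 : d1 ^+ 2 + d2 ^+ 2 != 0.
  by rewrite paddr_eq0 ?sqr_ge0 // !sqrf_eq0 negb_and.
split; [exact: real_dim_L0 | exact: iso_su2_u1_L0 | exact: L0_not_su3 ..].
Qed.
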